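(* Let $M\in\mathbb Z$, $s\in\{0,\dots,NL-1\}$ with $M\equiv s\bmod NL$, and $d,l$ non-negative integers with $l\ge d$. Then the linear map $\varrho^d_l:V^d_{s+lNL}\to\mathcal F^d_M$, $w\mapsto w\wedge|M-s-lNL\rangle$, is an isomorphism of vector spaces.
   Context: $N,L\ge2$. $V_{\rm aff}=\mathbb C[z,z^{-1}]\otimes\mathbb C^L\otimes\mathbb C^N$ with basis $u_k=z^{\underline k}\otimes\mathfrak v_{\dot k}\otimes\mathfrak u_{\bar k}$ ($k\in\mathbb Z$), where $k=\bar k-N(\dot k+L\underline k)$ uniquely with $\bar k\in\{1..N\}$, $\dot k\in\{1..L\}$, $\underline k\in\mathbb Z$. Wedges are antisymmetric; normally ordered wedges ($k_1>k_2>\cdots$) form bases. $\mathcal F_M$ has basis the normally ordered semi-infinite wedges $u_{k_1}\wedge u_{k_2}\wedge\cdots$ with $k_i=o_i:=M-i+1$ for all but finitely many $i$; $|K\rangle=u_K\wedge u_{K-1}\wedge\cdots$. Its degree is $\sum_i(\underline{o_i}-\underline{k_i})$ and $\mathcal F_M^d$ is the span of degree-$d$ wedges. $V_{s+lNL}$ is the span of normally ordered finite wedges $u_{k_1}\wedge\cdots\wedge u_{k_{s+lNL}}$ with $\underline{k_{s+lNL}}\le\underline{o_{s+lNL}}$ (with $V_0=\mathbb C$), graded by degree $\sum_{i=1}^{s+lNL}(\underline{o_i}-\underline{k_i})$; $V^d_{s+lNL}$ is the degree-$d$ component. *)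

From mathcomp Require Import all_boot all_order all_algebra.
From mathcomp Require Import reals complex.
From mathcomp Require Import finmap monalg.
Set Implicit Arguments. Unset Strict Implicit. Unset Printing Implicit Defensive.
Import Order.TTheory GRing.Theory Num.Theory.
Local Open Scope ring_scope.

(* Indexing of the basis u_k of V_aff = C[z,z^-1] (x) C^L (x) C^N, k in Z:    *)
(*   k = kbar - N (kdot + L kul),  kbar in {1..N}, kdot in {1..L}, kul in Z.  *)
(* (intdiv's %/ and %% are floor division / nonnegative remainder for a      *)
(*  positive divisor, so these are the unique such components.)             *)
Definition kbar (N : nat) (k : int) : int := ((k - 1) %% N%:Z)%Z + 1.
Definition kdot (N L : nat) (k : int) : int :=
  ((((kbar N k - k) %/ N%:Z)%Z - 1) %% L%:Z)%Z + 1.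
Definition kul (N L : nat) (k : int) : int :=
  ((((kbar N k - k) %/ N%:Z)%Z - kdot N L k) %/ L%:Z)%Z.

Definition o (M : int) (i : nat) : int := M - i%:Z + 1.

Definition normally_ordered (ks : seq int) : bool :=
  sorted (fun a b : int => b < a) ks.

(* A finite wedge u_{k_1} /\ ... /\ u_{k_n} is indexed by [:: k_1; ...; k_n]. *)
Definition fdeg (N L : nat) (M : int) (ks : seq int) : int :=
  \sum_(i < size ks) (kul N L (o M i.+1) - kul N L (nth 0 ks i)).

Definition V_basis (N L : nat) (M : int) (n : nat) (d : int) (ks : seq int)
  : bool :=
  [&& size ks == n, normally_ordered ks,
      (n == 0%N) || (kul N L (nth 0 ks n.-1) <= kul N L (o M n))
    & fdeg N L M ks == d].

(* The ambient space: finitely supported K-combinations of finite wedges. *)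
(* V^d_n = span of the basis wedges above. *)
Definition inV (K : fieldType) (N L : nat) (M : int) (n : nat) (d : int)
  (w : {malg K[seq int]}) : Prop :=
  forall ks, ks \in msupp w -> V_basis N L M n d ks.

(* A semi-infinite wedge u_{k_1} /\ u_{k_2} /\ ... with k_i = o_i for i > m  *)
(* is represented by the finite list p = [:: k_1; ...; k_m]:                 *)
Definition seminf (M : int) (p : seq int) (i : nat) : int :=
  if (i <= size p)%N then nth 0 p i.-1 else o M i.
Definition canonical (M : int) (p : seq int) : bool :=
  (size p == 0%N) || (nth 0 p (size p).-1 != o M (size p)).
Definition semi_normally_ordered (M : int) (p : seq int) : Prop :=
  forall i : nat, (1 <= i)%N -> seminf M p i.+1 < seminf M p i.
(* degree sum_i (ul(o_i) - ul(k_i)) (only i <= size p contribute) *)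
Definition sdeg (N L : nat) (M : int) (p : seq int) : int :=
  \sum_(1 <= i < (size p).+1) (kul N L (o M i) - kul N L (seminf M p i)).

Definition F_basis (N L : nat) (M : int) (d : int) (p : seq int) : Prop :=
  [/\ canonical M p, semi_normally_ordered M p & sdeg N L M p = d].

(* The Fock space F_M: finitely supported combinations of (representatives  *)
(* of) semi-infinite wedges; F^d_M = span of the degree-d basis wedges.    *)
Definition inF (K : fieldType) (N L : nat) (M : int) (d : int)
  (f : {malg K[seq int]}) : Prop :=
  forall p, p \in msupp f -> F_basis N L M d p.

Definition strip_step (M : int) (q : seq int) : seq int :=
  if (0 < size q)%N && (nth 0 q (size q).-1 == o M (size q))
  then take (size q).-1 q else q.
Definition strip (M : int) (q : seq int) : seq int :=
  iter (size q) (strip_step M) q.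

(* |K> = u_K /\ u_{K-1} /\ ... *)
(* For a normally ordered finite wedge ks with n factors and K = M - n:     *)
(*   u_{k_1} /\ ... /\ u_{k_n} /\ |M - n>                                    *)
(* is 0 if some k_i <= M - n (a repeated factor), and otherwise it is the   *)
(* normally ordered semi-infinite wedge k_1,...,k_n, M-n, M-n-1, ...        *)
(* (note o_{n+j} = M-n-j+1), i.e. the one represented by strip M ks.        *)
Definition wedge_vac_basis (K : fieldType) (M : int) (n : nat) (ks : seq int)
  : {malg K[seq int]} :=
  if normally_ordered ks && all (fun k => M - n%:Z < k) ks
  then << strip M ks >> else 0.

Definition rho (K : fieldType) (M : int) (n : nat) (w : {malg K[seq int]})
  : {malg K[seq int]} :=
  \sum_(ks <- msupp w) w@_ks *: wedge_vac_basis K M n ks.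

From Pilot Require Import Defs.
From mathcomp Require Import all_boot all_order all_algebra.
From mathcomp Require Import reals complex.
From mathcomp Require Import finmap monalg.
From mathcomp Require Import zify ring.
Set Implicit Arguments. Unset Strict Implicit. Unset Printing Implicit Defensive.
Import Order.TTheory GRing.Theory Num.Theory.
Local Open Scope ring_scope.

(* A basis wedge of V^d_n, n = s + l N L, is a normally ordered word k_1 > ... > k_n
   whose last letter exceeds M - n, so appending |M - n> merely continues it by
   o_{n+1}, o_{n+2}, ...: the result is represented by [strip M ks], and padding a
   canonical representative with o's up to length n ([pad M n]) undoes this while
   preserving the degree. Hence rho permutes basis vectors, and it is onto as soon
   as every degree-d basis wedge of F_M has a representative of length at most n.
   That is where d <= l enters: a longer representative has degree at least l + 1. *)

Section Kul.
Variables N L : nat.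
Hypotheses (N_gt0 : (0 < N)%N) (L_gt0 : (0 < L)%N).
Local Notation P := (N * L)%N%:Z.

Lemma P_gt0 : 0 < P.
Proof. by rewrite ltz_nat muln_gt0 N_gt0 L_gt0. Qed.

(* [k = kbar - N (kdot + L kul)] with [1 <= kbar <= N] and [1 <= kdot <= L] means
   [-k = N L kul + r] with [0 <= r < N L]. *)
Lemma kulE k : kul N L k = ((- k) %/ P)%Z.
Proof.
have N0 : N%:Z != 0 by rewrite eqz_nat -lt0n.
have L0 : L%:Z != 0 by rewrite eqz_nat -lt0n.
rewrite /kul /kdot /kbar.
have ea := divz_eq (k - 1) N; set x := ((k - 1) %/ N)%Z in ea.
have a0 : 0 <= ((k - 1) %% N)%Z by exact: modz_ge0.
have a1 : ((k - 1) %% N)%Z < N by apply: ltz_pmod; rewrite ltz_nat.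
have -> : ((k - 1) %% N)%Z + 1 - k = - x * N by lia.
rewrite mulzK //.
have eb := divz_eq (- x - 1) L; set y := ((- x - 1) %/ L)%Z in eb.
have b0 : 0 <= ((- x - 1) %% L)%Z by exact: modz_ge0.
have b1 : ((- x - 1) %% L)%Z < L by apply: ltz_pmod; rewrite ltz_nat.
have -> : - x - (((- x - 1) %% L)%Z + 1) = y * L by lia.
rewrite mulzK //; have P0 := P_gt0; apply/eqP; rewrite eq_le; apply/andP; split.
- by rewrite lez_divRL // PoszM; nia.
- by rewrite -ltzD1 ltz_divLR // PoszM; nia.
Qed.

Lemma kul_le a b : a <= b -> kul N L b <= kul N L a.
Proof. by move=> le_ab; rewrite !kulE; apply: lez_pdiv2r; rewrite ?lerN2 // ltW ?P_gt0. Qed.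

Lemma kul_Pmul u : kul N L (P * u) = - u.
Proof. by rewrite kulE -mulrN mulrC mulzK // gt_eqF ?P_gt0. Qed.

Lemma kul_lt_opp u k : (kul N L k < - u) = (P * u < k).
Proof. by rewrite kulE ltz_divLR ?P_gt0 // mulNr ltrN2 mulrC. Qed.

End Kul.

Section NonnegativeSums.
Variables (R : numDomainType) (F : nat -> R).

Lemma sum_nat_ge_term m n t : (m <= t < n)%N ->
  (forall i, (m <= i < n)%N -> 0 <= F i) -> F t <= \sum_(m <= i < n) F i.
Proof.
move=> /andP[le_mt lt_tn] F_ge0.
have sum_ge0 k l : (m <= k)%N -> (l <= n)%N -> 0 <= \sum_(k <= i < l) F i.
  move=> le_mk le_ln; rewrite big_nat_cond sumr_ge0 // => i /andP[/andP[? ?] _].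
  by apply: F_ge0; lia.
rewrite (big_cat_nat le_mt (ltnW lt_tn)) /= [X in _ + X]big_ltn //.
by rewrite addrCA lerDl addr_ge0 ?sum_ge0 // ?leqW // ltnW.
Qed.

Lemma sum_nat_ge_count a b P k n : (0 < P)%N -> (a <= b)%N -> (b + k * P < n)%N ->
  (forall i, (a <= i)%N -> 0 <= F i) -> (forall j, (j <= k)%N -> 1 <= F (b + j * P)%N) ->
  k.+1%:R <= \sum_(a <= i < n) F i.
Proof.
move=> P_gt0 le_ab + F_ge0 F_ge1; elim: k n F_ge1 => [|k IHk] n F_ge1 lt_n.
  apply: le_trans (F_ge1 0%N isT) _; rewrite mul0n addn0 in lt_n *.
  by apply: sum_nat_ge_term => [|i /andP[]]; [lia | auto].
have le_c : ((b + k * P).+1 <= n)%N by rewrite mulSn in lt_n; lia.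
rewrite (big_cat_nat _ le_c) /=; last by rewrite leqW // (leq_trans le_ab) ?leq_addr.
rewrite -addn1 natrD.
apply: lerD; first by apply: IHk => // j le_jk; apply: F_ge1; exact: leqW.
apply: le_trans (F_ge1 k.+1 (leqnn _)) _.
by apply: sum_nat_ge_term => [|i /andP[? _]]; [rewrite mulSn; lia | apply: F_ge0; lia].
Qed.
End NonnegativeSums.

Section Relabel.
Variable K : nzRingType.

Definition relabel (T U : choiceType) (g : T -> U) (w : {malg K[T]}) : {malg K[U]} :=
  \sum_(x <- msupp w) w@_x *: << g x >>.

Lemma relabelEw (T U : choiceType) (g : T -> U) (w : {malg K[T]}) (D : {fset T}) :
  (msupp w `<=` D)%fset -> relabel g w = \sum_(x <- D) w@_x *: << g x >>.
Proof.
move=> le_wD; rewrite /relabel (big_fset_incl _ le_wD) // => x _ /mcoeff_outdom ->.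
by rewrite scale0r.
Qed.

Lemma relabel0 (T U : choiceType) (g : T -> U) : relabel g 0 = 0 :> {malg K[U]}.
Proof. by rewrite /relabel msupp0 big_seq_fset0. Qed.

Lemma relabelD (T U : choiceType) (g : T -> U) : {morph relabel g : w1 w2 / w1 + w2}.
Proof.
move=> w1 w2; rewrite (relabelEw g (msuppD_le w1 w2)).
rewrite (relabelEw g (fsubsetUl (msupp w1) (msupp w2))).
rewrite (relabelEw g (fsubsetUr (msupp w1) (msupp w2))) -big_split.
by apply: eq_bigr => x _; rewrite mcoeffD scalerDl.
Qed.

Lemma relabelZ (T U : choiceType) (g : T -> U) c (w : {malg K[T]}) :
  relabel g (c *: w) = c *: relabel g w.
Proof.
rewrite (relabelEw g (msuppZ_le c w)) scaler_sumr.
by apply: eq_bigr => x _; rewrite mcoeffZ scalerA.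
Qed.

Lemma relabelU (T U : choiceType) (g : T -> U) x :
  relabel g << x >> = << g x >> :> {malg K[U]}.
Proof. by rewrite /relabel msuppU oner_eq0 big_seq_fset1 mcoeffUU scale1r. Qed.

Lemma relabel_comp (T U V : choiceType) (g : T -> U) (h : U -> V) (w : {malg K[T]}) :
  relabel h (relabel g w) = relabel (h \o g) w.
Proof.
rewrite {2}/relabel (big_morph (relabel h) (relabelD h) (relabel0 h)).
by apply: eq_bigr => x _; rewrite relabelZ relabelU.
Qed.

Lemma eq_in_relabel (T U : choiceType) (g h : T -> U) (w : {malg K[T]}) :
  {in msupp w, g =1 h} -> relabel g w = relabel h w.
Proof. by move=> eq_gh; apply: eq_big_seq => x /eq_gh ->. Qed.

Lemma relabel_id (T : choiceType) (w : {malg K[T]}) : relabel id w = w.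
Proof.
rewrite {2}[w]monalgE; apply: eq_bigr => x _; apply/malgP => y.
by rewrite mcoeffZ !mcoeffU mulr_natr.
Qed.

Lemma msupp_relabel (T U : choiceType) (g : T -> U) (w : {malg K[T]}) y :
  y \in msupp (relabel g w) -> exists2 x, x \in msupp w & g x = y.
Proof.
have [/hasP[x x_w /eqP <-] _ | /hasPn no_x] := boolP (has (fun x => g x == y) (msupp w)).
  by exists x.
rewrite -mcoeff_neq0 /relabel (big_morph _ (mcoeffD y) (mcoeff0 y)) big1_seq ?eqxx //.
by move=> x /no_x /negbTE gxy; rewrite mcoeffZ mcoeffU gxy mulr0.
Qed.
End Relabel.

Section Padding.
Variable M : int.

Definition pad (n : nat) (p : seq int) : seq int :=
  p ++ [seq o M i | i <- iota (size p).+1 (n - size p)].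

Lemma o_succ i : o M i.+1 = o M i - 1.
Proof. rewrite /o; lia. Qed.

Lemma seminf_nth q i : (i <= size q)%N -> seminf M q i = nth 0 q i.-1.
Proof. by rewrite /seminf => ->. Qed.

Lemma seminf_o q i : (size q < i)%N -> seminf M q i = o M i.
Proof. by rewrite /seminf ltnNge => /negbTE ->. Qed.

Lemma size_pad n p : (size p <= n)%N -> size (pad n p) = n.
Proof. by move=> le_pn; rewrite size_cat size_map size_iota subnKC. Qed.

Lemma pad_size p : pad (size p) p = p.
Proof. by rewrite /pad subnn cats0. Qed.

Lemma pad_rcons n p : (size p <= n)%N -> pad n.+1 p = rcons (pad n p) (o M n.+1).
Proof.
move=> le_pn; rewrite /pad subSn // -[(n - size p).+1]addn1 iotaD map_cat catA cats1.
by congr (rcons _ (o M _)); lia.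
Qed.

Lemma nth_pad n p i : (i < n)%N -> (size p <= n)%N -> nth 0 (pad n p) i = seminf M p i.+1.
Proof.
move=> lt_in le_pn; rewrite /pad /seminf nth_cat; set m := size p in le_pn *.
case: ltnP => // le_mi; have lt_imn : (i - m < n - m)%N by lia.
by rewrite (nth_map 0%N) ?nth_iota ?size_iota //; congr (o M); lia.
Qed.

Lemma seminf_pad n p i : (size p <= n)%N -> (0 < i)%N ->
  seminf M (pad n p) i = seminf M p i.
Proof.
move=> le_pn i_gt0; rewrite {1}/seminf size_pad //.
case: leqP => [le_in|lt_ni]; first by rewrite nth_pad ?prednK //; lia.
by rewrite /seminf leqNgt (leq_ltn_trans le_pn lt_ni).
Qed.

(* If p1 is shorter than p2, padding p1 puts [o M (size p2)] where p2 has its last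
   entry, which canonicity of p2 forbids. *)
Lemma pad_inj n p1 p2 : canonical M p1 -> canonical M p2 ->
  (size p1 <= n)%N -> (size p2 <= n)%N -> pad n p1 = pad n p2 -> p1 = p2.
Proof.
wlog le12 : p1 p2 / (size p1 <= size p2)%N.
  move=> wlog_le c1 c2 s1 s2 eq_pad.
  by case: (leqP (size p1) (size p2)) => [|/ltnW] le; [|apply/esym]; apply: wlog_le.
move=> _ /orP[/eqP sz0 | c2] s1 s2 eq_pad.
  by move: le12; rewrite sz0 leqn0 => /nilP ->; apply/esym/size0nil.
have [lt12 | le21] := ltnP (size p1) (size p2); last first.
  have eqs : size p1 = size p2 by apply/eqP; rewrite eqn_leq le12 le21.
  have take_pad p : take (size p) (pad n p) = p by rewrite take_size_cat.
  by rewrite -[p1]take_pad eq_pad eqs take_pad.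
have := congr1 (nth 0 ^~ (size p2).-1) eq_pad.
rewrite !nth_pad ?prednK //; try lia.
by rewrite /seminf leqNgt lt12 leqnn => eo; move: c2; rewrite -eo eqxx.
Qed.

Lemma strip_spec q :
  [/\ canonical M (strip M q), (size (strip M q) <= size q)%N
    & pad (size q) (strip M q) = q].
Proof.
suff strip_iter j : (size q <= j)%N ->
  [/\ canonical M (iter j (strip_step M) q), (size (iter j (strip_step M) q) <= size q)%N
    & pad (size q) (iter j (strip_step M) q) = q] by exact: strip_iter.
elim: j q => [|j IHj] q; first by rewrite leqn0 => /nilP ->.
move=> le_qj; rewrite iterSr.
case: (boolP (canonical M q)) => can_q.
  have fixq : strip_step M q = q.
    move: can_q; rewrite /canonical /strip_step.
    by case/orP=> [/eqP -> | /negbTE ->]; rewrite ?andbF.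
  by rewrite fixq iter_fix // pad_size.
move: can_q le_qj; case/lastP: q => [//|r x] /norP[_ /negbNE].
rewrite nth_last last_rcons size_rcons => /eqP x_o le_rj.
have -> : strip_step M (rcons r x) = r.
  by rewrite /strip_step nth_last last_rcons size_rcons -x_o eqxx -cats1 take_size_cat.
have [can_r le_r pad_r] := IHj r le_rj.
by rewrite pad_rcons // pad_r x_o; split=> //; exact: leqW.
Qed.

Lemma pad_strip q : pad (size q) (strip M q) = q.
Proof. by case: (strip_spec q). Qed.

Lemma strip_pad n p : canonical M p -> (size p <= n)%N -> strip M (pad n p) = p.
Proof.
move=> can_p le_pn; have [can_s le_s pad_s] := strip_spec (pad n p).
rewrite size_pad // in le_s pad_s; exact: (pad_inj can_s can_p le_s le_pn).
Qed.

Lemma semi_normally_ordered_pad n p : (size p <= n)%N ->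
  semi_normally_ordered M (pad n p) <-> semi_normally_ordered M p.
Proof.
move=> le_pn; rewrite /semi_normally_ordered.
by split=> ord i i_gt0; move: (ord i i_gt0); rewrite !seminf_pad.
Qed.

Lemma semi_normally_orderedE q : semi_normally_ordered M q <->
  normally_ordered q /\ ((0 < size q)%N -> o M (size q).+1 < nth 0 q (size q).-1).
Proof.
split=> [ord | [/(sortedP 0) ord last_gt] i i_gt0].
  split=> [|q_gt0]; last by have := ord _ q_gt0; rewrite seminf_o // seminf_nth.
  by apply/(sortedP 0) => i lt_iq; have := ord i.+1 isT; rewrite !seminf_nth // ltnW.
case: (ltngtP i (size q)) i_gt0 => [lt_iq | lt_qi | ->] i_gt0.
- rewrite !seminf_nth ?(ltnW lt_iq) //; have := ord i.-1; rewrite prednK //; exact.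
- by rewrite !seminf_o ?o_succ ?ltrBlDr ?ltrDl // ltnW.
- by rewrite seminf_o // seminf_nth //; exact: last_gt.
Qed.

(* Descending induction from i = m := size p, where canonicity and
   k_m > o_{m+1} = o_m - 1 give k_m > o_m. *)
Lemma seminf_gt_o p i : canonical M p -> semi_normally_ordered M p ->
  (0 < i <= size p)%N -> o M i < seminf M p i.
Proof.
move=> can_p ord /andP[i_gt0 le_ip]; rewrite -(subKn le_ip).
have : (size p - i < size p)%N by lia.
elim: (size p - i)%N => [|k IHk] lt_kp.
  have p_gt0 : (0 < size p)%N by lia.
  have := ord _ p_gt0; rewrite subn0 seminf_o // o_succ seminf_nth //.
  by move: can_p; rewrite /canonical (gtn_eqF p_gt0) /=; lia.
have := ord (size p - k.+1)%N ltac:(lia); have := IHk (ltnW lt_kp).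
have -> : ((size p - k.+1).+1 = size p - k)%N by lia.
have -> : o M (size p - k) = o M (size p - k.+1) - 1 by rewrite /o; lia.
lia.
Qed.
End Padding.

Lemma fdeg_pad N L M n p : (size p <= n)%N ->
  Defs.fdeg N L M (pad M n p) = sdeg N L M p.
Proof.
move=> le_pn; pose F i := kul N L (o M i) - kul N L (seminf M p i).
have -> : Defs.fdeg N L M (pad M n p) = \sum_(1 <= i < n.+1) F i.
  rewrite /Defs.fdeg size_pad // big_add1 big_mkord /=.
  by apply: eq_bigr => i _; rewrite nth_pad.
rewrite /sdeg -/F (big_cat_nat _ (leq_ltn_trans le_pn (ltnSn n))) //=.
rewrite [X in _ + X]big1_seq ?addr0 // => i /andP[_].
by rewrite mem_index_iota => /andP[lt_pi _]; rewrite /F seminf_o ?subrr.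
Qed.

Section Correspondence.
Variables (N L : nat) (M : int) (n : nat) (u : int).
Hypotheses (N_gt0 : (0 < N)%N) (L_gt0 : (0 < L)%N).
Local Notation P := (N * L)%N%:Z.
Hypothesis vacuum_level : M - n%:Z = P * u.

Lemma o_vacuum : o M n.+1 = P * u.
Proof. by rewrite /o -vacuum_level; lia. Qed.

Lemma kul_le_vacuum k : (kul N L k <= kul N L (o M n)) = (P * u < k).
Proof.
have o_n : o M n = P * u + 1 by rewrite /o -vacuum_level; lia.
apply/idP/idP => [le_k | lt_k]; last by rewrite o_n; apply: kul_le => //; lia.
rewrite -(kul_lt_opp N_gt0 L_gt0); apply: le_lt_trans le_k _.
by rewrite o_n kul_lt_opp // ltrDl.
Qed.

Lemma V_basis_pad d p : canonical M p -> (size p <= n)%N ->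
  V_basis N L M n d (pad M n p) <-> F_basis N L M d p.
Proof.
move=> can_p le_pn; rewrite /V_basis /F_basis size_pad // eqxx fdeg_pad //=.
have ordE : semi_normally_ordered M p <-> normally_ordered (pad M n p) /\
    ((0 < n)%N -> P * u < nth 0 (pad M n p) n.-1).
  by rewrite -(semi_normally_ordered_pad M le_pn) semi_normally_orderedE size_pad // o_vacuum.
have -> : (n == 0%N) || (kul N L (nth 0 (pad M n p) n.-1) <= kul N L (o M n)) =
    (0 < n)%N ==> (P * u < nth 0 (pad M n p) n.-1).
  by case: posnP => [-> // | _]; rewrite kul_le_vacuum.
split=> [/and3P[ord /implyP last_ok /eqP deg] | [_ /ordE[ord last_ok] deg]].
  by split=> //; apply/ordE.
by apply/and3P; split=> //; [apply/implyP | rewrite deg].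
Qed.

(* The positions i = n + 1 - (l - j) N L, j <= l, have o_i = N L (u + l - j), so
   each of them contributes at least one to the degree. *)
Lemma F_basis_size d l p : (d <= l)%N -> (l * (N * L) <= n)%N ->
  F_basis N L M d%:Z p -> (size p <= n)%N.
Proof.
move=> le_dl le_ln [can_p ord deg_p]; rewrite leqNgt; apply/negP => lt_np.
pose F i := kul N L (o M i) - kul N L (seminf M p i).
have F_ge0 i : (0 < i)%N -> 0 <= F i.
  move=> i_gt0; rewrite subr_ge0; case: (leqP i (size p)) => [le_ip | lt_pi].
    by apply: kul_le => //; apply/ltW/seminf_gt_o => //; rewrite i_gt0.
  by rewrite seminf_o.
have F_ge1 j : (j <= l)%N -> 1 <= F ((n - l * (N * L)).+1 + j * (N * L))%N.
  move=> le_jl; have le_jlP : (j * (N * L) <= l * (N * L))%N by rewrite leq_mul2r le_jl orbT.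
  set i := (_ + _)%N.
  have o_i : o M i = P * (u + l%:Z - j%:Z).
    rewrite /o /i -[M](subrK n%:Z) vacuum_level; lia.
  have := seminf_gt_o can_p ord (i := i) ltac:(lia).
  by rewrite /F o_i kul_Pmul // -(kul_lt_opp N_gt0 L_gt0); lia.
have NL_gt0 : (0 < N * L)%N by rewrite muln_gt0 N_gt0 L_gt0.
have lt_end : ((n - l * (N * L)).+1 + l * (N * L) < (size p).+1)%N by lia.
have := sum_nat_ge_count NL_gt0 (ltn0Sn _) lt_end F_ge0 F_ge1.
have -> : \sum_(1 <= i < (size p).+1) F i = d by rewrite -deg_p.
by rewrite natz lez_nat ltnNge le_dl.
Qed.

Lemma V_basis_gt d ks : V_basis N L M n d ks -> all (fun k => M - n%:Z < k) ks.
Proof.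
case/and4P=> /eqP size_ks ord last_ok _; rewrite vacuum_level.
case: (posnP n) last_ok => [n0 _ | n_gt0]; first by move: size_ks; rewrite n0 => /size0nil ->.
rewrite kul_le_vacuum /= => last_gt; apply/(all_nthP 0) => i lt_i.
have lt_ni : (i <= n.-1)%N by rewrite -ltnS prednK // -size_ks.
case: (ltngtP i n.-1) lt_ni => // [lt_in | -> //] _.
apply: lt_trans last_gt (sorted_ltn_nth (rev_trans lt_trans) 0 ord _ _ _ _ lt_in);
  by rewrite inE size_ks ?ltn_predL // (ltn_trans lt_in) ?ltn_predL.
Qed.

Lemma V_basis_strip d ks : V_basis N L M n d ks -> F_basis N L M d (strip M ks).
Proof.
move=> ks_V; have [can_s le_s pad_s] := strip_spec M ks.
case/and4P: (ks_V) => /eqP size_ks _ _ _; rewrite size_ks in le_s pad_s.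
by apply/V_basis_pad; rewrite ?pad_s.
Qed.

Variable K : fieldType.
Implicit Types w f : {malg K[seq int]}.

Lemma rhoE d w : inV N L M n d w -> rho M n w = relabel (strip M) w.
Proof.
move=> w_V; apply: eq_big_seq => ks /w_V ks_V.
by rewrite /wedge_vac_basis (V_basis_gt ks_V) andbT; case/and4P: ks_V => _ ->.
Qed.

Lemma rho_inF d w : inV N L M n d w -> inF N L M d (rho M n w).
Proof.
by move=> w_V p; rewrite (rhoE w_V) => /msupp_relabel[ks /w_V ks_V <-]; exact: V_basis_strip.
Qed.

Lemma relabel_pad_rho d w : inV N L M n d w -> relabel (pad M n) (rho M n w) = w.
Proof.
move=> w_V; rewrite (rhoE w_V) relabel_comp -[RHS]relabel_id.
by apply: eq_in_relabel => ks /w_V /and4P[/eqP <- _ _ _] /=; rewrite pad_strip.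
Qed.

Section Onto.
Variables (d l : nat) (f : {malg K[seq int]}).
Hypotheses (le_dl : (d <= l)%N) (le_ln : (l * (N * L) <= n)%N).
Hypothesis f_F : inF N L M d%:Z f.

Lemma relabel_pad_inV : inV N L M n d%:Z (relabel (pad M n) f).
Proof.
move=> ks /msupp_relabel[p /f_F p_F <-]; have [can_p _ _] := p_F.
exact/(V_basis_pad _ can_p (F_basis_size le_dl le_ln p_F)).
Qed.

Lemma rho_relabel_pad : rho M n (relabel (pad M n) f) = f.
Proof.
rewrite (rhoE relabel_pad_inV) relabel_comp -[RHS]relabel_id.
apply: eq_in_relabel => p /f_F p_F /=; have [can_p _ _] := p_F.
by rewrite strip_pad // (F_basis_size le_dl le_ln p_F).
Qed.
End Onto.
End Correspondence.

Lemma vacuum_level_mod N L (M : int) s l : (M = s%:Z %[mod (N * L)%N%:Z])%Z ->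
  exists u, M - (s + l * (N * L))%N%:Z = (N * L)%N%:Z * u.
Proof.
move/eqP; rewrite eqz_mod_dvd => /dvdzP[v Mv]; exists (v - l%:Z).
by rewrite PoszD PoszM mulrBr -[M](subrK s%:Z) Mv; ring.
Qed.

Theorem proposition3p3 (R : realType) (N L : nat) (M : int) (s d l : nat) :
  (2 <= N)%N -> (2 <= L)%N -> (s < N * L)%N ->
  (M = s%:Z %[mod (N * L)%N%:Z])%Z -> (d <= l)%N ->
  let n := (s + l * (N * L))%N in
  [/\ (forall w : {malg R[i][seq int]}, inV N L M n d%:Z w -> inF N L M d%:Z (rho M n w)),
      (forall w1 w2 : {malg R[i][seq int]}, inV N L M n d%:Z w1 -> inV N L M n d%:Z w2 ->
         rho M n w1 = rho M n w2 -> w1 = w2)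
    & (forall f : {malg R[i][seq int]}, inF N L M d%:Z f ->
         exists2 w, inV N L M n d%:Z w & rho M n w = f)].
Proof.
(* [s < N L] only determines s; the proof just needs N L to divide M - n. *)
move=> N_ge2 L_ge2 _ M_s le_dl n.
have N_gt0 : (0 < N)%N by exact: ltnW.
have L_gt0 : (0 < L)%N by exact: ltnW.
have [u vacuum] : exists u, M - n%:Z = (N * L)%N%:Z * u := vacuum_level_mod l M_s.
have le_ln : (l * (N * L) <= n)%N by exact: leq_addl.
split=> [w w_V | w1 w2 w1_V w2_V eq_rho | f f_F].
- exact/(rho_inF N_gt0 L_gt0 vacuum w_V).
- rewrite -(relabel_pad_rho N_gt0 L_gt0 vacuum w1_V) eq_rho.
  by rewrite (relabel_pad_rho N_gt0 L_gt0 vacuum w2_V).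
- exists (relabel (pad M n) f).
    exact/(relabel_pad_inV N_gt0 L_gt0 vacuum le_dl le_ln f_F).
  by rewrite (rho_relabel_pad N_gt0 L_gt0 vacuum le_dl le_ln f_F).
Qed.
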